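(* Let $\mathcal C$ be a category of noncrossing $\{x,y\}$-coloured partitions ($x^{-1}=x$, $y^{-1}=y$) all of whose blocks have even size, and which contains a partition with a block of size at least four. If no block of any partition in $\mathcal C$ contains points of both colours, then $\mathcal C$ is a free product.
   Context: Colour sets and partitions: a colour set is a set $\mathcal A$ with an involution $a\mapsto a^{-1}$. For words $w,w'$ on $\mathcal A$, an element of $P^{\mathcal A}(w,w')$ is a partition of $|w|+|w'|$ points drawn as an upper row coloured (left to right) by $w$ and a lower row coloured by $w'$; its subsets are blocks. It is noncrossing if there are no four points $k_1<k_2<k_3<k_4$ (ordering: upper row left to right, then lower row right to left) with $k_1,k_3$ in one block and $k_2,k_4$ in a different block. Category operations: tensor product, composition (erasing middle points and closed loops), adjoint (reflection), rotation (moving an extreme point to the other row and replacing its colour $a$ by $a^{-1}$). A category of noncrossing partitions is a family $\mathcal C(w,w')\subset NC^{\mathcal A}(w,w')$ stable under these operations and containing $\pi(a,a)$ for all $a$. For a category $\mathcal C$ on $\{x,y\}$, $\mathcal C_x$ (resp. $\mathcal C_y$) is the set of partitions in $\mathcal C$ all of whose points are coloured $x$ (resp. $y$); $\mathcal C$ is a free product if it equals the category generated by $\mathcal C_x\cup\mathcal C_y$. *)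

From mathcomp Require Import all_boot.
Set Implicit Arguments. Unset Strict Implicit. Unset Printing Implicit Defensive.

Definition colx : bool := false.
Definition coly : bool := true.

(* Points are indexed in the CYCLIC
   order of the paper: index i < |w| is the i-th upper point from the left;
   index |w| + k is the k-th lower point counted from the RIGHT. *)
Record cpart := CPart {
  up : seq bool;
  lo : seq bool;
  blocks : {set {set 'I_(size up + size lo)}};
  blocks_ok : partition blocks [set: 'I_(size up + size lo)] }.

Definition npts (p : cpart) : nat := size (up p) + size (lo p).

Definition colour (p : cpart) (u : 'I_(size (up p) + size (lo p))) : bool :=
  if val u < size (up p) then nth colx (up p) u
  else nth colx (rev (lo p)) (val u - size (up p)).

Arguments colour : clear implicits.

(* same block relation on cyclic indices (false when out of range) *)
Definition sb (p : cpart) (a b : nat) : bool :=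
  [exists u : 'I_(size (up p) + size (lo p)),
   exists v : 'I_(size (up p) + size (lo p)),
     [&& val u == a, val v == b & v \in pblock (blocks p) u]].

(* Points described as (row, position from the left); row true = upper. *)
Definition valid (p : cpart) (x : bool * nat) : bool :=
  if x.1 then x.2 < size (up p) else x.2 < size (lo p).

Definition pidx (p : cpart) (x : bool * nat) : nat :=
  if x.1 then x.2 else size (up p) + (size (lo p) - x.2.+1).

Definition conn (p : cpart) (x y : bool * nat) : bool :=
  [&& valid p x, valid p y & sb p (pidx p x) (pidx p y)].

Definition noncrossing (p : cpart) : Prop :=
  forall k1 k2 k3 k4, k1 < k2 -> k2 < k3 -> k3 < k4 -> k4 < npts p ->
    sb p k1 k3 -> sb p k2 k4 -> sb p k1 k2.

Definition is_id (a : bool) (r : cpart) : Prop :=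
  up r = [:: a] /\ lo r = [:: a] /\ sb r 0 1.

Definition tsplit (p : cpart) (x : bool * nat) : (bool * nat) + (bool * nat) :=
  let s := if x.1 then size (up p) else size (lo p) in
  if x.2 < s then inl x else inr (x.1, x.2 - s).

Definition is_tensor (p q r : cpart) : Prop :=
  up r = up p ++ up q /\ lo r = lo p ++ lo q /\
  forall x y, conn r x y =
    match tsplit p x, tsplit p y with
    | inl a, inl b => conn p a b
    | inr a, inr b => conn q a b
    | _, _ => false
    end.

Definition is_adjoint (p r : cpart) : Prop :=
  up r = lo p /\ lo r = up p /\
  forall x y, conn r x y = conn p (~~ x.1, x.2) (~~ y.1, y.2).

(* r = q p : p on top of q (lo p = up q), middle points and loops erased.
   Vertices of the stacked diagram: [0,a) upper row of p, [a,a+b) middle row,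
   [a+b,a+b+c) lower row of q, all from left to right. *)
Definition stack_edge (p q : cpart) (N : nat) : rel 'I_N :=
  fun u v =>
    let a := size (up p) in let b := size (lo p) in
    let toP k := if k < a then (true, k) else (false, k - a) in
    let toQ k := if k < a + b then (true, k - a) else (false, k - (a + b)) in
    ((val u < a + b) && (val v < a + b) && conn p (toP (val u)) (toP (val v)))
    || ((a <= val u) && (a <= val v) && conn q (toQ (val u)) (toQ (val v))).

Definition is_comp (p q r : cpart) : Prop :=
  lo p = up q /\ up r = up p /\ lo r = lo q /\
  let N := size (up p) + size (lo p) + size (lo q) in
  let emb x := if x.1 then x.2 else size (up p) + size (lo p) + x.2 in
  forall x y, conn r x y =
    [&& valid r x, valid r y &
        [exists u : 'I_N, exists v : 'I_N,
           [&& val u == emb x, val v == emb y &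
               connect (@stack_edge p q N) u v]]].

(* Rotations (colours are self-inverse here, so colours are unchanged).
   rotL: move the leftmost upper point to the leftmost lower position.
   rotR: move the rightmost upper point to the rightmost lower position. *)
Definition is_rotL (p r : cpart) : Prop :=
  exists a w, up p = a :: w /\ up r = w /\ lo r = a :: lo p /\
    forall k l, sb r k l =
      sb p (if k.+1 == npts p then 0 else k.+1) (if l.+1 == npts p then 0 else l.+1).

Definition is_rotR (p r : cpart) : Prop :=
  exists a w, up p = rcons w a /\ up r = w /\ lo r = rcons (lo p) a /\
    forall k l, sb r k l = sb p k l.

Definition category (C : cpart -> Prop) : Prop :=
  (forall p, C p -> noncrossing p) /\
  (forall a r, is_id a r -> C r) /\
  (forall p q r, C p -> C q -> is_tensor p q r -> C r) /\
  (forall p q r, C p -> C q -> is_comp p q r -> C r) /\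
  (forall p r, C p -> is_adjoint p r -> C r) /\
  (forall p r, is_rotL p r \/ is_rotR p r -> (C p -> C r) /\ (C r -> C p)).

Definition gen_cat (S : cpart -> Prop) (p : cpart) : Prop :=
  forall D, category D -> (forall q, S q -> D q) -> D p.

Definition mono (c : bool) (p : cpart) : bool :=
  all (eq_op c) (up p) && all (eq_op c) (lo p).

Definition C_col (C : cpart -> Prop) (c : bool) (p : cpart) : Prop :=
  C p /\ mono c p.

Definition free_product (C : cpart -> Prop) : Prop :=
  forall p, C p <-> gen_cat (fun q => C_col C colx q \/ C_col C coly q) p.

(* Rotations move every point of a partition to the lower row, so it
   suffices to treat partitions with only lower points.  A noncrossing partition has a
   block consisting of consecutive points; rotated to the front, this block and the
   remaining points form a tensor product.  Both factors stay in C: a closed initial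
   segment contains two adjacent points of one block (blocks are even and do not cross),
   they have the same colour and can be capped off with a pair partition, and iterating
   deletes the whole segment.  The block alone is monochromatic, hence in C_x or C_y,
   and by induction on the number of points the rest lies in the category generated by
   C_x and C_y; so does their tensor product and its rotation back. *)

From mathcomp Require Import all_boot zify.
Set Implicit Arguments. Unset Strict Implicit. Unset Printing Implicit Defensive.

Lemma sb_pblock (p : cpart) (x y : 'I_(size (up p) + size (lo p))) :
  sb p x y = (y \in pblock (blocks p) x).
Proof.
apply/existsP/idP => [[u /existsP [v /and3P [/eqP hu /eqP hv]]]|hy].
  by rewrite (val_inj hu) (val_inj hv).
by exists x; apply/existsP; exists y; rewrite !eqxx.
Qed.

Lemma sb_bound (p : cpart) a b : sb p a b -> a < npts p /\ b < npts p.
Proof. by case/existsP=> u /existsP [v /and3P [/eqP <- /eqP <- _]]; split; apply: ltn_ord. Qed.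

Lemma sb_equiv (p : cpart) (x y z : 'I_(size (up p) + size (lo p))) :
  sb p z z * (sb p x y -> sb p x z = sb p y z).
Proof. by rewrite !sb_pblock; apply: (pblock_equivalence (blocks_ok p)); rewrite inE. Qed.

Lemma sb_refl (p : cpart) a : a < npts p -> sb p a a.
Proof. by move=> ha; case: (sb_equiv (Ordinal ha) (Ordinal ha) (Ordinal ha)). Qed.

Lemma sb_trans_eq (p : cpart) a b c : sb p a b -> sb p a c = sb p b c.
Proof.
move=> hab; have [ha hb] := sb_bound hab.
case hc: (c < npts p); first by case: (sb_equiv (Ordinal ha) (Ordinal hb) (Ordinal hc)) => _ ->.
by apply/idP/idP => /sb_bound []; rewrite hc.
Qed.

Lemma sb_sym (p : cpart) a b : sb p a b -> sb p b a.
Proof. by move=> hab; rewrite -(sb_trans_eq _ hab) sb_refl //; case: (sb_bound hab). Qed.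

Lemma sb_trans (p : cpart) a b c : sb p a b -> sb p b c -> sb p a c.
Proof. by move=> hab; rewrite (sb_trans_eq _ hab). Qed.

Definition equiv_on (N : nat) (e : rel nat) :=
  [/\ forall a, a < N -> e a a,
      forall a b, a < N -> b < N -> e a b -> e b a &
      forall a b c, a < N -> b < N -> c < N -> e a b -> e b c -> e a c].

Definition presents (p : cpart) (u l : seq bool) (e : rel nat) :=
  [/\ up p = u, lo p = l &
   forall a b, sb p a b = [&& a < size u + size l, b < size u + size l & e a b]].

Lemma presents_self (p : cpart) : presents p (up p) (lo p) (sb p).
Proof.
split=> // a b; case h: (sb p a b); last by rewrite !andbF.
by have [-> ->] := sb_bound h.
Qed.

Lemma presents_sb p u l e : presents p u l e -> presents p u l (sb p).
Proof. by case=> <- <- _; apply: presents_self. Qed.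

Lemma presents_equiv p u l e : presents p u l e -> equiv_on (size u + size l) e.
Proof.
case=> hu hl hs; have hN : npts p = size u + size l by rewrite /npts hu hl.
have sbE a b : a < npts p -> b < npts p -> sb p a b = e a b by rewrite hs -hN => -> ->.
rewrite -hN; split=> [a ha | a b ha hb | a b c ha hb hc].
- by rewrite -sbE // sb_refl.
- by rewrite -!sbE //; apply: sb_sym.
- by rewrite -!sbE //; apply: sb_trans.
Qed.

Lemma presents_exists u l (e : rel nat) : equiv_on (size u + size l) e ->
  exists p, presents p u l e.
Proof.
case=> er es et; set N := size u + size l.
pose R (x y : 'I_N) := e x y.
have eqR : {in [set: 'I_N] & &, equivalence_rel R}.
  move=> x y z _ _ _; split; first exact: er.
  move=> hxy; apply/idP/idP; last exact: et.
  by apply: et; rewrite ?ltn_ord //; apply: es.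
exists (@CPart u l (equivalence_partition R [set: 'I_N]) (equivalence_partitionP eqR)).
split=> // a b; rewrite /sb /=.
case ha: (a < N); case hb: (b < N) => /=.
- apply/existsP/idP => [[x /existsP [y /and3P [/eqP <- /eqP <-]]]|hab].
    by rewrite (pblock_equivalence_partition eqR) ?inE.
  exists (Ordinal ha); apply/existsP; exists (Ordinal hb).
  by rewrite !eqxx (pblock_equivalence_partition eqR) ?inE.
all: by apply/existsP => [[x /existsP [y /and3P [/eqP hx /eqP hy _]]]];
  move: ha hb; rewrite -hx -hy !ltn_ord.
Qed.

Lemma presents_ext p u l e e' : presents p u l e ->
  {in gtn (size u + size l) &, e =2 e'} -> presents p u l e'.
Proof.
case=> h1 h2 h3 he; split=> // a b; rewrite h3.
by case ha: (a < _); case hb: (b < _) => //=; rewrite he.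
Qed.

Lemma partition_eq_pblock (T : finType) (P1 P2 : {set {set T}}) :
  partition P1 setT -> partition P2 setT -> (forall x, pblock P1 x = pblock P2 x) ->
  P1 = P2.
Proof.
suff sub (P P' : {set {set T}}) : partition P setT -> partition P' setT ->
    (forall x, pblock P x = pblock P' x) -> P \subset P'.
  by move=> o1 o2 hp; apply/eqP; rewrite eqEsubset !sub.
move=> oP oP' hp; case/and3P: oP => _ tP nP; case/and3P: oP' => /eqP cP' _ _.
apply/subsetP => B hB.
have /set0Pn [x hx] : B != set0 by apply: contraNneq nP => <-.
by rewrite -(def_pblock tP hB hx) hp pblock_mem // cP' inE.
Qed.

Lemma presents_inj p q u l e e' : presents p u l e -> presents q u l e' ->
  {in gtn (size u + size l) &, e =2 e'} -> p = q.
Proof.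
case: p => u1 l1 B1 ok1; case: q => u2 l2 B2 ok2.
case=> /= h1 h2 hs1 [/= h3 h4 hs2] hee; subst.
have hB : B1 = B2.
  apply: (partition_eq_pblock ok1 ok2) => x; apply/setP => y.
  rewrite -(sb_pblock (p := CPart ok1)) -(sb_pblock (p := CPart ok2)) hs1 hs2 /=.
  by rewrite !ltn_ord hee ?inE.
by subst; congr CPart; exact: bool_irrelevance.
Qed.

Lemma presents_pullback p u l e u' l' (f : nat -> nat) : presents p u l e ->
  (forall x, x < size u' + size l' -> f x < size u + size l) ->
  exists q, presents q u' l' (fun x y => e (f x) (f y)).
Proof.
move=> /presents_equiv [er es et] hf; apply: presents_exists.
split=> [a ha | a b ha hb | a b c ha hb hc]; [apply: er | apply: es | apply: et]; exact: hf.
Qed.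

Definition prefix_closed (p : cpart) (k : nat) := forall a b, a < k -> sb p a b -> b < k.

(* [p] has no upper points and cyclic colour word [s]: the cyclic order reads the
   lower row from right to left. *)
Notation lower_presents p s e := (presents p [::] (rev s) e).

(* [(x + j) mod n] for [x < n] and [j <= n]: the index map of [rot j] on words of
   length [n]. *)
Definition cshift (n j x : nat) : nat := if x + j < n then x + j else x + j - n.

Ltac decide_leqs :=
  repeat match goal with
  | |- context [?x <= ?y] =>
    (have -> : (x <= y) = true by lia) || (have -> : (x <= y) = false by lia)
  end.

Ltac solve_index_bool :=
  decide_leqs; rewrite /= ?andbF ?andbT; try done; try (f_equal; lia);
  try match goal with |- context [?x <= ?y] =>
    let h := fresh "h" in case h: (x <= y); solve_index_bool
  end.

Ltac case_ifs := repeat match goal with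
 | |- context [if ?b then _ else _] =>
   lazymatch b with context [if _ then _ else _] => fail
   | _ => let h := fresh "h" in case h: b end
 end.

Lemma block_extremes (p : cpart) x : x < npts p ->
  exists mn mx, [/\ sb p x mn, sb p x mx & forall z, sb p x z -> mn <= z <= mx].
Proof.
move=> hx; have ex : exists z, sb p x z by exists x; apply: sb_refl.
have ub z : sb p x z -> z <= npts p by case/sb_bound => _ /ltnW.
case: (ex_minnP ex) => mn h1 h2; case: (ex_maxnP ex ub) => mx h3 h4.
by exists mn, mx; split=> // z hz; rewrite h2 ?h4.
Qed.

Lemma noncrossing_nested (p : cpart) a b z m : noncrossing p ->
  sb p a b -> a < z < b -> ~~ sb p a z -> sb p z m -> a < m < b.
Proof.
move=> nc hab /andP [az zb] naz hzm.
have [_ hbN] := sb_bound hab; have [_ hmN] := sb_bound hzm.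
case: (ltngtP m a) => [ma|am|ma]; last by rewrite -ma (sb_sym hzm) in naz.
  by case/negP: naz; apply: sb_sym; apply: sb_trans hzm (nc _ _ _ _ ma az zb hbN (sb_sym hzm) hab).
case: (ltngtP m b) => [// | bm | mb]; last by rewrite -mb in hab; rewrite (sb_trans_eq _ hab) (sb_sym hzm) in naz.
by rewrite (nc a z b m az zb bm hmN hab hzm) in naz.
Qed.

Lemma block_interval_or_nested (p : cpart) a b : noncrossing p -> sb p a b ->
  (forall z, sb p a z -> a <= z <= b) ->
  (forall z, z < npts p -> sb p a z = (a <= z <= b)) \/
  exists mn mx, [/\ a < mn, mx < b, sb p mn mx & forall z, sb p mn z -> mn <= z <= mx].
Proof.
move=> nc hab hin.
case: (boolP [forall z : 'I_(npts p), (a <= z <= b) ==> sb p a z]) => [hall|].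
  left=> z hz; apply/idP/idP; first exact: hin.
  exact: implyP (forallP hall (Ordinal hz)).
case/forallPn=> z; rewrite negb_imply => /andP [/andP [az zb] naz]; right.
have inner : a < z < b.
  have za : z != a :> nat by apply: contraNneq naz => ->; rewrite sb_refl // (sb_bound hab).1.
  have zb' : z != b :> nat by apply: contraNneq naz => ->.
  lia.
have [mn [mx [hzmn hzmx hext]]] := block_extremes (ltn_ord z).
have /andP [amn _] := noncrossing_nested nc hab inner naz hzmn.
have /andP [_ mxb] := noncrossing_nested nc hab inner naz hzmx.
exists mn, mx; split=> //; first exact: sb_trans (sb_sym hzmn) hzmx.
by move=> w; rewrite -(sb_trans_eq _ hzmn); apply: hext.
Qed.

Lemma noncrossing_interval_block (p : cpart) : noncrossing p -> 0 < npts p ->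
  exists a b, [/\ a <= b, b < npts p & forall z, z < npts p -> sb p a z = (a <= z <= b)].
Proof.
move=> nc hN.
suff span d a b : b - a <= d -> sb p a b -> (forall z, sb p a z -> a <= z <= b) ->
    exists a b, [/\ a <= b, b < npts p & forall z, z < npts p -> sb p a z = (a <= z <= b)].
  have [mn [mx [_ h0mx hmx]]] := block_extremes hN.
  by apply: (span _ 0 mx (leqnn _) h0mx) => z /hmx /andP [_ ->].
elim: d a b => [|d IH] a b hd hab hin.
all: have /andP [hle _] := hin _ hab; have [_ hbN] := sb_bound hab.
all: case: (block_interval_or_nested nc hab hin) => [hint | [mn [mx [amn mxb hmnx hext]]]].
- by exists a, b.
- by have /andP [hmn _] := hext _ hmnx; lia.
- by exists a, b.
- by apply: (IH mn mx) => //; have /andP [hmn _] := hext _ hmnx; lia.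
Qed.

Lemma noncrossing_adjacent_pair (p : cpart) k : noncrossing p ->
  (forall x, x < npts p -> exists2 y, y != x & sb p x y) ->
  0 < k <= npts p -> prefix_closed p k ->
  exists2 i, i.+1 < k & sb p i i.+1.
Proof.
move=> nc partner /andP [k0 kN] closed.
suff gap d a b : b - a <= d -> a < b -> sb p a b -> b < k ->
    exists2 i, i.+1 < k & sb p i i.+1.
  have [y y0 h0y] := partner 0 (leq_trans k0 kN).
  by apply: (gap y 0 y); [rewrite subn0 | rewrite lt0n | | exact: closed h0y].
elim: d a b => [|d IH] a b hd ab hab bk; first lia.
case: (boolP (sb p a a.+1)) => haa; first by exists a => //; lia.
have inner : a < a.+1 < b.
  by rewrite ltnSn /= ltn_neqAle ab andbT; apply: contraNneq haa => ->.
have [m ma hm] := partner a.+1 (leq_trans (leq_ltn_trans ab bk) kN).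
have /andP [am mb] := noncrossing_nested nc hab inner haa hm.
by apply: (IH a.+1 m) => //; lia.
Qed.

Lemma pidx_bound p x : valid p x -> pidx p x < npts p.
Proof. by rewrite /valid /pidx /npts; case: x => [[] i] /=; lia. Qed.

Lemma conn_presents p u l e x y : presents p u l e ->
  conn p x y = [&& valid p x, valid p y & e (pidx p x) (pidx p y)].
Proof.
case=> hu hl hs; rewrite /conn hs -hu -hl.
by case vx: (valid p x); case vy: (valid p y); rewrite //= !pidx_bound.
Qed.

Lemma connect_equiv (T : finType) (R : rel T) :
  reflexive R -> transitive R -> connect R =2 R.
Proof.
move=> Rxx Rtr x y; apply/idP/idP; last exact: connect1.
case/connectP=> pth + ->; elim: pth x => //= z pth IH x /andP [Rxz /IH].
exact: Rtr.
Qed.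

Lemma exists_ord2_val N (P : rel 'I_N) (Q : rel nat) a b :
  (forall u v : 'I_N, P u v = Q u v) ->
  [exists u : 'I_N, exists v : 'I_N, [&& val u == a, val v == b & P u v]] =
  [&& a < N, b < N & Q a b].
Proof.
move=> PQ; apply/existsP/idP => [[u /existsP [v /and3P [/eqP <- /eqP <-]]]|].
  by rewrite PQ !ltn_ord.
case/and3P=> ha hb Qab; exists (Ordinal ha); apply/existsP; exists (Ordinal hb).
by rewrite !eqxx PQ.
Qed.

Section CategoryMoves.
Variable D : cpart -> Prop.
Hypothesis catD : category D.

Lemma cat_rotR_iff a w l e p q :
  presents p (rcons w a) l e -> presents q w (rcons l a) e -> (D p <-> D q).
Proof.
case: catD => _ [_ [_ [_ [_ hrot]]]] [hpu hpl hps] [hqu hql hqs].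
apply: hrot; right; exists a, w; do 3!split => //; first by rewrite hql hpl.
by move=> k m; rewrite hps hqs !size_rcons addSnnS.
Qed.

Lemma cat_rotL_iff a w l e p q : presents p (a :: w) l e ->
  presents q w (a :: l) (fun x y => e (cshift (size w + size l).+1 1 x)
                                      (cshift (size w + size l).+1 1 y)) ->
  (D p <-> D q).
Proof.
case: catD => _ [_ [_ [_ [_ hrot]]]] [hpu hpl hps] [hqu hql hqs].
apply: hrot; left; exists a, w; do 3!split => //; first by rewrite hql hpl.
pose N := (size w + size l).+1.
have wrap_lt x : ((if x.+1 == N then 0 else x.+1) < N) = (x < N) by rewrite /N; case_ifs; lia.
have wrapE x : x < N -> (if x.+1 == N then 0 else x.+1) = cshift N 1 x.
  by rewrite /cshift /N; case_ifs; lia.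
move=> k m; rewrite hps hqs /npts hpu hpl /= addnS addSn -/N !wrap_lt.
by case hk: (k < N); case hm: (m < N); rewrite //= !wrapE.
Qed.

Lemma cat_move_lower u l e p r :
  presents p u l e -> lower_presents r (u ++ rev l) e -> (D p <-> D r).
Proof.
elim/last_ind: u l p => [|w a IH] l p hp hr.
  by rewrite /= revK in hr; rewrite (presents_inj hp hr).
have [q hq] : exists q, presents q w (rcons l a) e.
  apply: (presents_pullback (f := id)) hp _ => x.
  by rewrite !size_rcons addSnnS.
rewrite (cat_rotR_iff hp hq); apply: IH hq _.
by rewrite rev_rcons -cat_rcons.
Qed.

Lemma cat_rot1_iff a t e p r : lower_presents p (a :: t) e ->
  lower_presents r (rcons t a)
    (fun x y => e (cshift (size t).+1 1 x) (cshift (size t).+1 1 y)) ->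
  (D p <-> D r).
Proof.
move=> hp hr.
have [q hq] : exists q, presents q [:: a] (rev t) e.
  by apply: (presents_pullback (f := id)) hp _ => x; rewrite /= !size_rev.
rewrite -(cat_move_lower hq (r := p)); last by rewrite /= revK.
by apply: (cat_rotL_iff hq); rewrite /= size_rev -rev_rcons.
Qed.

Lemma cat_rot_iff j s e p r : j <= size s -> lower_presents p s e ->
  lower_presents r (rot j s) (fun x y => e (cshift (size s) j x) (cshift (size s) j y)) ->
  (D p <-> D r).
Proof.
elim: j r => [|j IH] r hj hp hr.
  rewrite rot0 in hr; rewrite (presents_inj hp hr) // => x y.
  by rewrite !inE /= size_rev /cshift !addn0 => -> ->.
have [q hq] : exists q, lower_presents q (rot j s)
    (fun x y => e (cshift (size s) j x) (cshift (size s) j y)).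
  by apply: presents_pullback hp _ => x; rewrite /= !size_rev size_rot /cshift; case_ifs; lia.
rewrite (IH q (ltnW hj) hp hq).
case hrs: (rot j s) hq => [|a t] hq.
  by move: hj; rewrite -(size_rot j s) hrs.
have hst : (size t).+1 = size s by rewrite -(size_rot j s) hrs.
apply: (cat_rot1_iff hq).
have -> : rcons t a = rot j.+1 s by rewrite -add1n rotD ?add1n // hrs rot1_cons.
apply: (presents_ext hr) => x y; rewrite !inE /= size_rev size_rot => hx hy.
by rewrite hst /cshift; congr e; case_ifs; lia.
Qed.

Definition tensor_rel (k : nat) (e1 e2 : rel nat) : rel nat := fun x y =>
  if x < k then (y < k) && e1 x y else (k <= y) && e2 (x - k) (y - k).

Lemma cat_tensor_lower s1 s2 e1 e2 q p r : D q -> D p ->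
  lower_presents q s1 e1 -> lower_presents p s2 e2 ->
  lower_presents r (s1 ++ s2) (tensor_rel (size s1) e1 e2) -> D r.
Proof.
case: catD => _ [_ [hten _]] Dq Dp hq hp hr; apply: (hten p q r Dp Dq).
have [hqu hql _] := hq; have [hpu hpl _] := hp; have [hru hrl _] := hr.
split; first by rewrite hru hpu hqu.
split; first by rewrite hrl hpl hql rev_cat.
move=> [[] i] [[] j]; rewrite (conn_presents _ _ hr) /tsplit /valid /pidx hru hrl hpu hpl /=.
all: rewrite ?size_rev ?size_cat; case_ifs; rewrite ?(conn_presents _ _ hp) ?(conn_presents _ _ hq).
all: rewrite /valid /pidx ?hqu ?hql ?hpu ?hpl /= ?size_rev /tensor_rel.
all: solve_index_bool.
Qed.

Lemma cat_pair c r : presents r [::] [:: c; c] (fun _ _ => true) -> D r.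
Proof.
case: catD => _ [hid _] hr.
have [r0 hr0] : exists r0, presents r0 [:: c] [:: c] (fun _ _ => true).
  by apply: presents_exists; split.
rewrite -(cat_move_lower hr0 hr); apply: (hid c).
by case: hr0 => hu hl hs; rewrite /is_id hs hu hl.
Qed.

Lemma cat_cap_top c l e p r : D p -> presents p [:: c; c] l e -> e 0 1 ->
  presents r [::] l (fun x y => e x.+2 y.+2) -> D r.
Proof.
case: catD => _ [_ [_ [hcomp _]]] Dp hp e01 hr.
have [q hq] : exists q, presents q [::] [:: c; c] (fun _ _ => true).
  by apply: presents_exists; split.
apply: (hcomp q p r (cat_pair hq) Dp).
have [hqu hql _] := hq; have [hpu hpl _] := hp; have [hru hrl _] := hr.
have [er es et] := presents_equiv hp.
split; first by rewrite hql hpu.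
split; first by rewrite hru hqu.
split; first by rewrite hrl hpl.
rewrite hqu hql hpl; cbv zeta.
pose g u := if u < 2 then u else 2 + (size l - (u - 2).+1).
have g_lt u : u < 0 + 2 + size l -> g u < 2 + size l by rewrite /g; case_ifs; lia.
have e_top u v : u < 2 -> v < 2 -> e u v.
  by case: u v => [|[|u]] [|[|v]] // _ _; [apply: er | apply: es | apply: er].
(* Since [e 0 1], the pair on top adds no connection that [e] does not already make. *)
have edgeE (u v : 'I_(0 + 2 + size l)) : stack_edge q p u v = e (g u) (g v).
  have := ltn_ord u; have := ltn_ord v.
  rewrite /stack_edge (conn_presents _ _ hq) (conn_presents _ _ hp) /valid /pidx hqu hql hpu hpl /g /=.
  rewrite !subn0 => hv hu.
  case: (ltnP u 2) => hu2; case: (ltnP v 2) => hv2 /=.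
  - by rewrite e_top.
  all: solve_index_bool.
have connE (u v : 'I_(0 + 2 + size l)) :
    connect (stack_edge q p (N := 0 + 2 + size l)) u v = e (g u) (g v).
  rewrite (eq_connect edgeE) connect_equiv // => [x | y x z].
    by apply: er; apply: g_lt.
  by apply: et; apply: g_lt.
move=> x y; rewrite (conn_presents _ _ hr).
rewrite (exists_ord2_val (Q := fun a b => e (g a) (g b))); last exact: connE.
case: x y => [[] i] [[] j]; rewrite /valid /pidx hru hrl /g /=.
all: solve_index_bool.
Qed.

Definition skip2 (k x : nat) : nat := if x < k then x else x.+2.

Lemma cat_cap c t1 t2 e p r : D p -> lower_presents p (t1 ++ c :: c :: t2) e ->
  e (size t1) (size t1).+1 ->
  lower_presents r (t1 ++ t2) (fun x y => e (skip2 (size t1) x) (skip2 (size t1) y)) ->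
  D r.
Proof.
move=> Dp hp e_cap hr.
pose n := size (t1 ++ c :: c :: t2); pose m := size (t2 ++ t1).
have hn : n = m.+2 by rewrite /n /m !size_cat /= addnS addnS addnC.
have hm : m = size t2 + size t1 by rewrite /m size_cat.
pose e1 x y := e (cshift n (size t1) x) (cshift n (size t1) y).
have [p1 hp1] : exists p1, lower_presents p1 (rot (size t1) (t1 ++ c :: c :: t2)) e1.
  by apply: presents_pullback hp _ => x; rewrite /= !size_rev size_rot -/n /cshift; case_ifs; lia.
have Dp1 : D p1 by rewrite -(cat_rot_iff _ hp hp1) // -/n; lia.
rewrite rot_size_cat /= in hp1.
have [q hq] : exists q, presents q [:: c; c] (rev (t2 ++ t1)) e1.
  by apply: (presents_pullback (f := id)) hp1 _ => x; rewrite /= !size_rev.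
have Dq : D q by rewrite (cat_move_lower hq (r := p1)) // revK.
have [r1 hr1] : exists r1, presents r1 [::] (rev (t2 ++ t1)) (fun x y => e1 x.+2 y.+2).
  by apply: presents_pullback hq _ => x; rewrite /= !size_rev.
have Dr1 : D r1.
  apply: cat_cap_top Dq hq _ hr1.
  by rewrite /e1 /cshift (_ : 0 + size t1 < n) 1?(_ : 1 + size t1 < n) ?add1n //; lia.
have [r2 hr2] : exists r2, lower_presents r2 (rot (size t2) (t2 ++ t1))
    (fun x y => e1 (cshift m (size t2) x).+2 (cshift m (size t2) y).+2).
  by apply: presents_pullback hr1 _ => x; rewrite /= !size_rev size_rot -/m /cshift; case_ifs; lia.
have Dr2 : D r2 by rewrite -(cat_rot_iff _ hr1 hr2) // -/m; lia.
rewrite rot_size_cat in hr2.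
suff -> : r = r2 by [].
apply: (presents_inj hr hr2) => x y; rewrite !inE /= !size_rev !size_cat => hx hy.
by rewrite /e1 /skip2 /cshift hn /m size_cat; congr e; case_ifs; lia.
Qed.

Lemma cat_glue_closed_prefix t s p q r :
  lower_presents p (t ++ s) (sb p) -> prefix_closed p (size t) ->
  lower_presents q t (sb p) -> lower_presents r s (fun a b => sb p (a + size t) (b + size t)) ->
  D q -> D r -> D p.
Proof.
move=> hp hcl hq hr Dq Dr; apply: (cat_tensor_lower Dq Dr hq hr).
apply: (presents_ext (presents_sb hp)) => x y _ _; rewrite /tensor_rel.
case: (ltnP x (size t)) => hx.
  by case: (ltnP y (size t)) => hy //=; apply/negbTE/negP => /(hcl _ _ hx); lia.
case: (ltnP y (size t)) => hy /=; last by rewrite !subnK.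
by apply/negbTE/negP => /sb_sym /(hcl _ _ hy); lia.
Qed.
End CategoryMoves.

Lemma even_block_partner (p : cpart) :
  (forall B, B \in blocks p -> ~~ odd #|B|) ->
  forall x, x < npts p -> exists2 y, y != x & sb p x y.
Proof.
move=> even x hx; pose x' : 'I_(size (up p) + size (lo p)) := Ordinal hx.
have x_cover : x' \in cover (blocks p).
  by case/and3P: (blocks_ok p) => /eqP -> _ _; rewrite inE.
have := even _ (pblock_mem x_cover).
rewrite (cardsD1 x') mem_pblock x_cover /= add0n negbK => /odd_gt0.
rewrite card_gt0 => /set0Pn [y]; rewrite !inE => /andP [yx hy].
exists y; last by rewrite (sb_pblock x' y).
by apply: contraNneq yx => yx; apply/eqP/val_inj.
Qed.

Lemma sb_colour (p : cpart) x y :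
  (forall B, B \in blocks p -> forall u v, u \in B -> v \in B -> colour p u = colour p v) ->
  sb p x y -> nth colx (up p ++ rev (lo p)) x = nth colx (up p ++ rev (lo p)) y.
Proof.
move=> mono hxy; have [hx hy] := sb_bound hxy.
pose x' : 'I_(size (up p) + size (lo p)) := Ordinal hx.
pose y' : 'I_(size (up p) + size (lo p)) := Ordinal hy.
have x_cover : x' \in cover (blocks p).
  by case/and3P: (blocks_ok p) => /eqP -> _ _; rewrite inE.
have := mono _ (pblock_mem x_cover) x' y'.
by rewrite /colour !nth_cat mem_pblock x_cover -(sb_pblock x' y') => ->.
Qed.

Lemma lower_presents_self (p : cpart) : up p = [::] -> lower_presents p (rev (lo p)) (sb p).
Proof. by move=> hu; rewrite revK -hu; apply: presents_self. Qed.

Section EvenMonochromatic.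
Variable C : cpart -> Prop.
Hypothesis catC : category C.
Hypothesis even_blocks : forall p, C p -> forall B, B \in blocks p -> ~~ odd #|B|.
Hypothesis mono_blocks : forall p, C p -> forall B, B \in blocks p ->
  forall u v, u \in B -> v \in B -> colour p u = colour p v.

Lemma closed_prefix_split_pair t s p : C p -> lower_presents p (t ++ s) (sb p) ->
  prefix_closed p (size t) -> 0 < size t ->
  exists c t1 t2, t = t1 ++ c :: c :: t2 /\ sb p (size t1) (size t1).+1.
Proof.
move=> Cp hp hcl tpos; have [hpu hpl _] := hp.
have [i ik hi] : exists2 i, i.+1 < size t & sb p i i.+1.
  apply: noncrossing_adjacent_pair hcl; first by case: catC => nc _; apply: nc.
    exact: even_block_partner (even_blocks Cp).
  by rewrite tpos /npts hpu hpl size_rev size_cat /=; lia.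
have it : i < size t by lia.
exists (nth colx t i), (take i t), (drop i.+2 t); rewrite size_take it; split=> //.
have := sb_colour (mono_blocks Cp) hi; rewrite hpu hpl revK /= !nth_cat it ik => hc.
by rewrite -{1}(cat_take_drop i t) (drop_nth colx it) (drop_nth colx ik) -hc.
Qed.

Lemma cat_drop_closed_prefix t s p r : C p -> lower_presents p (t ++ s) (sb p) ->
  prefix_closed p (size t) ->
  lower_presents r s (fun a b => sb p (a + size t) (b + size t)) -> C r.
Proof.
move: {2}(size t) (leqnn (size t)) => n; elim: n t s p r => [|n IH] t s p r ht Cp hp hcl hr.
  have t0 : t = [::] by apply/nilP; rewrite /nilp; lia.
  by rewrite t0 in hp; rewrite -(presents_inj hp hr) // => a b; rewrite t0 /= !addn0.
have [t0 | tpos] := posnP (size t); first by apply: (IH t s p r) => //; lia.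
have [c [t1 [t2 [ht_eq hi]]]] := closed_prefix_split_pair Cp hp hcl tpos.
have hsize : size t = size t1 + size t2 + 2 by rewrite {1}ht_eq !size_cat /=; lia.
have [p' hp'] : exists p', lower_presents p' (t1 ++ t2 ++ s)
    (fun x y => sb p (skip2 (size t1) x) (skip2 (size t1) y)).
  apply: presents_pullback hp _ => x; rewrite /= !size_rev !size_cat hsize /skip2.
  by case_ifs; lia.
have Cp' : C p'.
  apply: (cat_cap catC (c := c) (t1 := t1) (t2 := t2 ++ s) (e := sb p) Cp) => //.
  by rewrite [in t ++ s]ht_eq -catA in hp.
apply: (IH (t1 ++ t2) s p') => //; first by rewrite size_cat; lia.
- by rewrite -catA; apply: presents_sb hp'.
- move=> a b; rewrite size_cat => ha; have [_ _ ->] := hp' => /and3P [_ _ hab].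
  have a_lt : skip2 (size t1) a < size t by rewrite /skip2; case_ifs; lia.
  by move: (hcl _ _ a_lt hab); rewrite /skip2; case_ifs; lia.
- apply: (presents_ext hr) => a b; rewrite !inE /= size_rev => ha hb.
  have [_ _ ->] := hp'; rewrite /skip2 /= !size_rev !size_cat.
  solve_index_bool.
Qed.

Lemma cat_keep_closed_prefix t s p r : C p -> lower_presents p (t ++ s) (sb p) ->
  prefix_closed p (size t) -> lower_presents r t (sb p) -> C r.
Proof.
move=> Cp hp hcl hr.
(* After rotating [t] to the back, the complementary segment [s] is a closed prefix. *)
have hN : size (t ++ s) = size t + size s := size_cat t s.
pose e x y := sb p (cshift (size (t ++ s)) (size t) x) (cshift (size (t ++ s)) (size t) y).
have [p2 hp2] : exists p2, lower_presents p2 (rot (size t) (t ++ s)) e.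
  by apply: presents_pullback hp _ => x; rewrite /= !size_rev size_rot hN /cshift; case_ifs; lia.
have Cp2 : C p2 by rewrite -(cat_rot_iff catC _ hp hp2) // hN leq_addr.
rewrite rot_size_cat in hp2; have [_ _ sb2] := hp2.
apply: (cat_drop_closed_prefix Cp2 (presents_sb hp2)).
- move=> a b ha; rewrite sb2 /e hN size_rev size_cat /= => /and3P [_ hb /sb_sym hba].
  case: (ltnP b (size s)) => // hsb.
  have hb_lt : cshift (size t + size s) (size t) b < size t by rewrite /cshift; case_ifs; lia.
  by move: (hcl _ _ hb_lt hba); rewrite /cshift; case_ifs; lia.
- apply: (presents_ext hr) => a b; rewrite !inE /= size_rev => ha hb.
  by rewrite sb2 /e hN size_rev size_cat /cshift /=; solve_index_bool.
Qed.

Variable D : cpart -> Prop.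
Hypothesis catD : category D.
Hypothesis D_generators : forall q, C_col C colx q \/ C_col C coly q -> D q.

Lemma cat_one_block q : C q -> up q = [::] ->
  (forall x y, x < npts q -> y < npts q -> sb q x y) -> D q.
Proof.
move=> Cq hup one; apply: D_generators.
pose c := nth colx (rev (lo q)) 0.
suff : mono c q by case: c => hm; [right | left].
rewrite /mono hup /= -all_rev; apply/(all_nthP colx) => i; rewrite size_rev => hi.
have hN : npts q = size (lo q) by rewrite /npts hup.
have := sb_colour (mono_blocks Cq) (one 0 i _ _); rewrite hup hN /c.
by move=> -> //; lia.
Qed.

Lemma cat_block_prefix w m p : C p -> lower_presents p w (sb p) -> 0 < m <= size w ->
  (forall x y, x < m -> y < size w -> sb p x y = (y < m)) ->
  (forall r, C r -> up r = [::] -> size (lo r) < size w -> D r) -> D p.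
Proof.
move=> Cp hp /andP [m0 mw] block smaller.
have hcl : prefix_closed p m.
  move=> x y hx hxy; rewrite -(block x y) //.
  by move: hxy; have [_ _ ->] := hp; rewrite /= size_rev => /and3P [].
have hm : size (take m w) = m by rewrite size_take; case: ltnP => // ?; lia.
have hpw : lower_presents p (take m w ++ drop m w) (sb p).
  by rewrite cat_take_drop; apply: presents_sb hp.
rewrite -hm in hcl.
have [q hq] : exists q, lower_presents q (take m w) (sb p).
  by apply: (presents_pullback (f := id)) hpw _ => x; rewrite /= !size_rev size_cat; lia.
have [r hr] : exists r, lower_presents r (drop m w)
    (fun x y => sb p (x + size (take m w)) (y + size (take m w))).
  by apply: presents_pullback hpw _ => x; rewrite /= !size_rev size_cat; lia.
apply: (cat_glue_closed_prefix catD hpw hcl hq hr).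
- have [hqu hql sbq] := hq.
  apply: (cat_one_block _ hqu); first exact: cat_keep_closed_prefix Cp hpw hcl hq.
  move=> x y; rewrite /npts hqu hql size_rev /= hm => hx hy.
  by rewrite sbq /= size_rev hm hx hy block //; lia.
- have [hru hrl _] := hr.
  apply: (smaller r _ hru); first exact: cat_drop_closed_prefix Cp hpw hcl hr.
  by rewrite hrl size_rev size_drop; lia.
Qed.

Lemma cat_lower_generated p : C p -> up p = [::] -> D p.
Proof.
move en: (size (lo p)) => n; elim/ltn_ind: n p en => n IH p en Cp hup.
have hps := lower_presents_self hup; set s := rev (lo p) in hps.
have hs : size s = npts p by rewrite size_rev /npts hup.
case: (boolP [forall x : 'I_(npts p), forall y : 'I_(npts p), sb p x y]) => [one|].
  by apply: cat_one_block => // x y hx hy; apply: (forallP (forallP one (Ordinal hx)) (Ordinal hy)).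
case/forallPn=> x0 /forallPn [y0 not_one].
have nc : noncrossing p by case: catC => nc _; apply: nc.
have [a [b [ab bN block_ab]]] := noncrossing_interval_block nc (leq_ltn_trans (leq0n x0) (ltn_ord x0)).
have mN : b - a + 1 < npts p.
  rewrite ltnNge; apply: contra not_one => Nm.
  have all_a z : z < npts p -> sb p a z by move=> hz; rewrite block_ab //; lia.
  by rewrite -(sb_trans_eq _ (all_a _ (ltn_ord x0))) all_a.
have a_le : a <= size s by lia.
pose e1 x y := sb p (cshift (size s) a x) (cshift (size s) a y).
have [p1 hp1] : exists p1, lower_presents p1 (rot a s) e1.
  apply: presents_pullback hps _ => x.
  have hls : size (lo p) = size s by rewrite size_rev.
  by rewrite /= !size_rev size_rot /cshift; case_ifs; lia.
apply/(cat_rot_iff catD a_le hps hp1).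
apply: (cat_block_prefix (m := b - a + 1) _ (presents_sb hp1)).
- by rewrite -(cat_rot_iff catC a_le hps hp1).
- by rewrite size_rot hs; lia.
- move=> x y hx; have [_ _ ->] := hp1; rewrite /= size_rev size_rot => hy.
  rewrite hy (_ : x < size s) /=; last lia.
  rewrite /e1 -(sb_trans_eq _ (_ : sb p a (cshift (size s) a x))).
    by rewrite block_ab; rewrite /cshift; case_ifs; lia.
  by rewrite block_ab; rewrite /cshift; case_ifs; lia.
- move=> r Cr hur; rewrite size_rot hs /npts hup en => hr.
  exact: IH hr r erefl Cr hur.
Qed.

End EvenMonochromatic.

Theorem lemma6p2 (C : cpart -> Prop) :
  category C ->
  (forall p, C p -> forall B, B \in blocks p -> ~~ odd #|B|) ->
  (exists p, C p /\ exists2 B, B \in blocks p & 4 <= #|B|) ->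
  (forall p, C p -> forall B, B \in blocks p ->
     forall u v, u \in B -> v \in B -> colour p u = colour p v) ->
  free_product C.
Proof.
move=> catC even _ mono p; split=> [Cp D catD gens | genp]; last first.
  by apply: (genp _ catC) => q [[] | []].
have [r hr] : exists r, lower_presents r (up p ++ rev (lo p)) (sb p).
  by apply: (presents_pullback (f := id) (presents_self p)) => x; rewrite /= size_rev size_cat size_rev.
have [hru _ _] := hr.
rewrite (cat_move_lower catD (presents_self p) hr).
apply: (cat_lower_generated catC even mono catD gens _ hru).
by rewrite -(cat_move_lower catC (presents_self p) hr).
Qed.
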